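(* Let $\mathcal{D}$ be a distribution on $\mathbb{R}^d\times\mathbb{R}$ such that, for $(\mathbf{x},y)\sim\mathcal{D}$, $\|\mathbf{x}\|_2\le1$ and $|y|\le B$ with probability $1$, and suppose the second moments $\mathbb{E}_{\mathcal{D}}[x_i^2]$, $i\in[d]$, are known. Let $\bar{\mathbf{w}}$ be the output of DDAERR on $m$ i.i.d. examples from $\mathcal{D}$ with budget $k$, run with $\eta=\Big(m\big(\tfrac1k\|\mathbb{E}_{\mathcal{D}}[\mathbf{x}^2]\|_{1/2}+1\big)\Big)^{-1/2}$. Then for every $\mathbf{w}^*\in\mathbb{R}^d$ with $\|\mathbf{w}^*\|_2\le B$, $$\mathbb{E}_{\mathcal{D},A}\big[L_{\mathcal{D}}(\bar{\mathbf{w}})\big]\le L_{\mathcal{D}}(\mathbf{w}^* )+\frac{4B^2}{\sqrt m}\sqrt{\frac1k\|\mathbb{E}_{\mathcal{D}}[\mathbf{x}^2]\|_{1/2}+1}.$$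
   Context: Loss $\ell(\mathbf{w};\mathbf{x},y)=\frac12(\langle\mathbf{w},\mathbf{x}\rangle-y)^2$; risk $L_{\mathcal{D}}(\mathbf{w})=\mathbb{E}_{(\mathbf{x},y)\sim\mathcal{D}}[\ell(\mathbf{w};\mathbf{x},y)]$. $\mathbb{E}_{\mathcal{D}}[\mathbf{x}^2]$ is the vector with entries $\mathbb{E}_{\mathcal{D}}[x_i^2]$; for a vector $\mathbf{a}$, $\|\mathbf{a}\|_{1/2}=\big(\sum_{i=1}^d\sqrt{|a_i|}\big)^2$. Algorithm GAERR (parameters $B,\eta>0$, probabilities $q_i$ with $\sum_iq_i=1$, integer budget $k>0$; input $(\mathbf{x}_t,y_t)$, $t=1,\dots,m$): initialize $\mathbf{w}_1\ne0$, $\|\mathbf{w}_1\|_2\le B$ arbitrarily. For each $t$: for $r=1,\dots,k$ draw $i_{t,r}$ with probability $q_{i_{t,r}}$ and set $\widetilde{\mathbf{x}}_{t,r}=\frac{1}{q_{i_{t,r}}}\mathbf{x}_t[i_{t,r}]\mathbf{e}_{i_{t,r}}$; $\widetilde{\mathbf{x}}_t=\frac1k\sum_r\widetilde{\mathbf{x}}_{t,r}$; draw $j_t$ with probability $p_j=w_{t,j}^2/\|\mathbf{w}_t\|_2^2$ and set $\widetilde\phi_t=\frac{w_{t,j_t}}{p_{j_t}}\mathbf{x}_t[j_t]-y_t$; $\widetilde{\mathbf{g}}_t=\widetilde\phi_t\widetilde{\mathbf{x}}_t$; $\mathbf{v}_t=\mathbf{w}_t-\eta\widetilde{\mathbf{g}}_t$;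 $\mathbf{w}_{t+1}=\mathbf{v}_t B/\max\{\|\mathbf{v}_t\|_2,B\}$. Output $\bar{\mathbf{w}}=\frac1m\sum_{t=1}^m\mathbf{w}_t$. DDAERR is GAERR with $q_i=\sqrt{\mathbb{E}_{\mathcal{D}}[x_i^2]}\big/\sum_{j=1}^d\sqrt{\mathbb{E}_{\mathcal{D}}[x_j^2]}$. $\mathbb{E}_{\mathcal{D},A}$ is expectation over the examples and the algorithm's randomness. *)

From HB Require Import structures.
From mathcomp Require Import all_boot all_order all_algebra.
From mathcomp Require Import all_classical all_reals all_analysis.
Set Implicit Arguments. Unset Strict Implicit. Unset Printing Implicit Defensive.
Import Order.TTheory GRing.Theory Num.Theory.
Local Open Scope ring_scope.

Section GAERR.
Variable R : realType.
Variable d : nat.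

Definition dotv (u v : 'rV[R]_d) : R := \sum_(i < d) u 0 i * v 0 i.
Definition norm2 (v : 'rV[R]_d) : R := Num.sqrt (dotv v v).

Definition half_norm (a : 'I_d -> R) : R := (\sum_(i < d) Num.sqrt `|a i|) ^+ 2.

Definition sqloss (w x : 'rV[R]_d) (y : R) : R := 2^-1 * (dotv w x - y) ^+ 2.

Variables (dT : measure_display) (T : measurableType dT).
Variable P : probability T R.          (* the distribution D, via (X,Y) *)
Variable X : T -> 'rV[R]_d.
Variable Y : T -> R.

Definition risk (w : 'rV[R]_d) : \bar R := (\int[P]_t (sqloss w (X t) (Y t))%:E)%E.

Definition second_moment (i : 'I_d) : R := fine (\int[P]_t ((X t 0 i) ^+ 2)%:E)%E.

Variables (B eta : R) (q : 'I_d -> R) (k : nat).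

Definition xtilde (s : {ffun 'I_k -> 'I_d}) (x : 'rV[R]_d) : 'rV[R]_d :=
  k%:R^-1 *: \sum_(r < k) ((q (s r))^-1 * x 0 (s r)) *: (delta_mx 0 (s r) : 'rV[R]_d).

Definition sweight (s : {ffun 'I_k -> 'I_d}) : R := \prod_(r < k) q (s r).

Definition pj (w : 'rV[R]_d) (j : 'I_d) : R := w 0 j ^+ 2 / norm2 w ^+ 2.

(* expectation over j_t of F(phi~_t); convention when w_t = 0: phi~_t = -y *)
Definition avg_phi (w x : 'rV[R]_d) (y : R) (F : R -> \bar R) : \bar R :=
  if w == 0 then F (- y)
  else (\sum_(j < d) (pj w j)%:E * F (w 0 j / pj w j * x 0 j - y)%R)%E.

Definition update (w : 'rV[R]_d) (phi : R) (xt : 'rV[R]_d) : 'rV[R]_d :=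
  let v := w - eta *: (phi *: xt) in (B / Num.max (norm2 v) B) *: v.

Definition avg_iter (ws : seq 'rV[R]_d) : 'rV[R]_d :=
  (size ws)%:R^-1 *: \sum_(w <- ws) w.

(* expectation, over n further fresh examples and the algorithm's randomness,
   of f applied to the full history of iterates, starting from history ws *)
Fixpoint run_exp (f : seq 'rV[R]_d -> \bar R) (n : nat) (ws : seq 'rV[R]_d)
  : \bar R :=
  match n with
  | 0 => f ws
  | n'.+1 =>
    let w := last 0 ws in
    (\int[P]_t (\sum_(s : {ffun 'I_k -> 'I_d})
        (sweight s)%:E *
        avg_phi w (X t) (Y t)
          (fun phi => run_exp f n' (rcons ws (update w phi (xtilde s (X t)))))))%E
  end.

Definition expected_output_risk (m : nat) (w1 : 'rV[R]_d) : \bar R :=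
  run_exp (fun ws => risk (avg_iter ws)) m.-1 [:: w1].

End GAERR.

Definition ddaerr_q (R : realType) (d : nat) (mom : 'I_d -> R) (i : 'I_d) : R :=
  Num.sqrt (mom i) / \sum_(j < d) Num.sqrt (mom j).

From HB Require Import structures.
From mathcomp Require Import all_boot all_order all_algebra.
From mathcomp Require Import all_classical all_reals all_analysis.
From mathcomp Require Import measurable_realfun.
From mathcomp Require Import ring lra.
Set Implicit Arguments. Unset Strict Implicit. Unset Printing Implicit Defensive.
Import Order.TTheory GRing.Theory Num.Theory.
Local Open Scope ring_scope.

(* Projected SGD with the unbiased gradient estimate [phi~ x~].  For a fixed
   example, averaging over the algorithm's draws and using that the projection
   onto the [B]-ball is nonexpansive,
     E|w' - w*|^2 <= |w - w*|^2 - 2 eta (<w, x> - y) <x, w - w*>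
                     + eta^2 E[phi~^2] E|x~|^2,
   where E[phi~^2] <= 4 B^2 and, for the DDAERR probabilities, the expectation of
   E|x~|^2 over the data is at most ||E[x^2]||_{1/2} / k + 1.  Convexity of the
   loss turns the middle term into a loss gap; summing over the rounds (an
   induction on the rounds remaining in [run_exp]) and Jensen's inequality for
   the averaged output give the bound, and [eta] balances the two error terms. *)

Section DotProduct.
Variables (R : realType) (d : nat).
Implicit Types u v w z : 'rV[R]_d.

Definition sqnorm u := dotv u u.

Lemma dotvC u v : dotv u v = dotv v u.
Proof. by apply: eq_bigr => i _; rewrite mulrC. Qed.

Lemma dotvDl u v w : dotv (u + v) w = dotv u w + dotv v w.
Proof. by rewrite /dotv -big_split; apply: eq_bigr => i _; rewrite !mxE mulrDl. Qed.

Lemma dotvBl u v w : dotv (u - v) w = dotv u w - dotv v w.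
Proof. by rewrite /dotv -sumrB; apply: eq_bigr => i _; rewrite !mxE mulrBl. Qed.

Lemma dotvZl (c : R) u w : dotv (c *: u) w = c * dotv u w.
Proof. by rewrite /dotv mulr_sumr; apply: eq_bigr => i _; rewrite !mxE mulrA. Qed.

Lemma dotvDr u v w : dotv w (u + v) = dotv w u + dotv w v.
Proof. by rewrite dotvC dotvDl !(dotvC w). Qed.

Lemma dotvBr u v w : dotv w (u - v) = dotv w u - dotv w v.
Proof. by rewrite dotvC dotvBl !(dotvC w). Qed.

Lemma dotvZr (c : R) u w : dotv w (c *: u) = c * dotv w u.
Proof. by rewrite dotvC dotvZl dotvC. Qed.

Lemma dotv_suml (s : seq 'rV[R]_d) w :
  dotv (\sum_(u <- s) u) w = \sum_(u <- s) dotv u w.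
Proof.
elim: s => [|u s IHs]; last by rewrite !big_cons dotvDl IHs.
by rewrite !big_nil /dotv big1 // => i _; rewrite mxE mul0r.
Qed.

Lemma dotv0l w : dotv 0 w = 0.
Proof. by rewrite /dotv big1 // => i _; rewrite mxE mul0r. Qed.

Lemma sqnorm_ge0 u : 0 <= sqnorm u.
Proof. by apply: sumr_ge0 => i _; rewrite -expr2 sqr_ge0. Qed.

Lemma coord_sqr_le_sqnorm u j : u 0 j ^+ 2 <= sqnorm u.
Proof.
rewrite /sqnorm /dotv (bigD1 j) //= -expr2 lerDl.
by apply: sumr_ge0 => i _; rewrite -expr2 sqr_ge0.
Qed.

Lemma sqnorm_eq0 u : (sqnorm u == 0) = (u == 0).
Proof.
apply/eqP/eqP => [u0|->]; last by rewrite /sqnorm dotv0l.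
apply/rowP => j; rewrite mxE; apply/eqP; rewrite -sqrf_eq0 eq_le sqr_ge0 andbT.
by rewrite -u0 coord_sqr_le_sqnorm.
Qed.

Lemma sqnorm_gt0 u : u != 0 -> 0 < sqnorm u.
Proof. by rewrite -sqnorm_eq0 lt_neqAle sqnorm_ge0 eq_sym => ->. Qed.

Lemma norm2_ge0 u : 0 <= norm2 u.
Proof. exact: sqrtr_ge0. Qed.

Lemma norm2_sqr u : norm2 u ^+ 2 = sqnorm u.
Proof. by rewrite /norm2 sqr_sqrtr // sqnorm_ge0. Qed.

Lemma norm2Z (c : R) u : norm2 (c *: u) = `|c| * norm2 u.
Proof.
by rewrite /norm2 dotvZl dotvZr mulrA -expr2 sqrtrM ?sqr_ge0 // sqrtr_sqr.
Qed.

Lemma sqnorm_le u (b : R) : norm2 u <= b -> sqnorm u <= b ^+ 2.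
Proof.
move=> ub; rewrite -norm2_sqr ler_sqr ?nnegrE ?norm2_ge0 //.
exact: le_trans (norm2_ge0 u) ub.
Qed.

Lemma sqnormBZ u v (c : R) :
  sqnorm (u - c *: v) = sqnorm u - 2 * c * dotv u v + c ^+ 2 * sqnorm v.
Proof. by rewrite /sqnorm !dotvBl !dotvBr !dotvZl !dotvZr (dotvC v u); ring. Qed.

Lemma sqnormB_le u v (b : R) : norm2 u <= b -> norm2 v <= b ->
  sqnorm (u - v) <= 4 * b ^+ 2.
Proof.
move=> ub vb; have := sqnorm_ge0 (u + v).
rewrite /sqnorm !(dotvBl, dotvBr, dotvDl, dotvDr) (dotvC v u).
have := sqnorm_le ub; have := sqnorm_le vb; rewrite /sqnorm; lra.
Qed.

Lemma cauchy_schwarz_sqr u v : dotv u v ^+ 2 <= sqnorm u * sqnorm v.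
Proof.
have [v0|vn0] := eqVneq v 0; first by rewrite v0 dotvC dotv0l /sqnorm dotv0l expr0n mulr0.
have vp := sqnorm_gt0 vn0; rewrite -subr_ge0.
have -> : sqnorm u * sqnorm v - dotv u v ^+ 2 =
    sqnorm v * sqnorm (u - (dotv u v / sqnorm v) *: v).
  by rewrite sqnormBZ; field; rewrite gt_eqF.
by rewrite mulr_ge0 ?sqnorm_ge0.
Qed.

Lemma cauchy_schwarz u v : dotv u v <= norm2 u * norm2 v.
Proof.
apply: le_trans (ler_norm _) _.
rewrite -ler_sqr ?nnegrE ?mulr_ge0 ?norm2_ge0 // real_normK ?num_real //.
by rewrite exprMn !norm2_sqr cauchy_schwarz_sqr.
Qed.

Definition ball_proj (b : R) v := (b / Num.max (norm2 v) b) *: v.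

Lemma norm2_ball_proj (b : R) v : 0 < b -> norm2 (ball_proj b v) <= b.
Proof.
move=> b0; have mp : 0 < Num.max (norm2 v) b by rewrite lt_max b0 orbT.
rewrite /ball_proj norm2Z ger0_norm ?divr_ge0 ?(ltW b0) ?(ltW mp) //.
rewrite mulrAC ler_pdivrMr // ler_wpM2l ?(ltW b0) //.
by rewrite le_max lexx.
Qed.

(* Writing [v - z = (c v - z) + (1 - c) v] with [c = b / |v|], the cross term
   [(1 - c) <c v - z, v>] is nonnegative since [<z, v> <= b |v| = c |v|^2]. *)
Lemma ball_proj_nonexpansive (b : R) v z : 0 < b -> norm2 z <= b ->
  sqnorm (ball_proj b v - z) <= sqnorm (v - z).
Proof.
move=> b0 zb; rewrite /ball_proj.
have [vb|bv] := leP (norm2 v) b; first by rewrite divff ?gt_eqF // scale1r.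
set c := b / norm2 v.
have nv0 : 0 < norm2 v := lt_trans b0 bv.
have c1 : c <= 1 by rewrite ler_pdivrMr // mul1r ltW.
have cb : c * norm2 v = b by rewrite divfK // gt_eqF.
have -> : v - z = (c *: v - z) + (1 - c) *: v.
  by rewrite scalerBl scale1r [RHS]addrC addrA subrK.
rewrite /sqnorm !(dotvBl, dotvBr, dotvDl, dotvDr, dotvZl, dotvZr) (dotvC z v).
have : 0 <= (1 - c) * (c * dotv v v - dotv v z).
  rewrite mulr_ge0 ?subr_ge0 // -[dotv v v]norm2_sqr.
  apply: le_trans (cauchy_schwarz v z) _.
  by rewrite expr2 mulrA cb [leLHS]mulrC ler_wpM2r ?norm2_ge0.
have : 0 <= (1 - c) ^+ 2 * dotv v v by rewrite mulr_ge0 ?sqr_ge0 ?sqnorm_ge0.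
lra.
Qed.

Lemma updateE (b eta : R) w p x :
  update b eta w p x = ball_proj b (w - eta *: (p *: x)).
Proof. by []. Qed.

Lemma sqloss_ge0 u x (y : R) : 0 <= sqloss u x y.
Proof. by rewrite /sqloss mulr_ge0 ?invr_ge0 ?ler0n ?sqr_ge0. Qed.

End DotProduct.

Section IndexSampling.
Variables (R : realType) (d k : nat) (q : 'I_d -> R).
Hypothesis q_sum1 : \sum_(j < d) q j = 1.
Implicit Types (s : {ffun 'I_k -> 'I_d}) (x u : 'rV[R]_d).

Lemma sweight_ge0 s : (forall j, 0 <= q j) -> 0 <= sweight q s.
Proof. by move=> q_ge0; apply: prodr_ge0. Qed.

Lemma sum_sweight_prod (F : 'I_k -> 'I_d -> R) :
  \sum_(s : {ffun 'I_k -> 'I_d}) sweight q s * \prod_(l < k) F l (s l) =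
  \prod_(l < k) \sum_(j < d) q j * F l j.
Proof. by rewrite bigA_distr_bigA; apply: eq_bigr => s _; rewrite -big_split. Qed.

Lemma sweight_sum : \sum_(s : {ffun 'I_k -> 'I_d}) sweight q s = 1.
Proof.
transitivity (\prod_(l < k) \sum_(j < d) q j * 1).
  by rewrite -sum_sweight_prod; apply: eq_bigr => s _; rewrite big1 ?mulr1.
by apply: big1 => l _; under eq_bigr do rewrite mulr1.
Qed.

Lemma sum_sweight_coord r (g : 'I_d -> R) :
  \sum_(s : {ffun 'I_k -> 'I_d}) sweight q s * g (s r) = \sum_(j < d) q j * g j.
Proof.
pose F l j := if l == r then g j else 1.
have Fr s : g (s r) = \prod_(l < k) F l (s l).
  by rewrite (bigD1 r) //= /F eqxx big1 ?mulr1 // => l /negbTE ->.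
under eq_bigr do rewrite Fr.
rewrite sum_sweight_prod (bigD1 r) //= [X in _ * X]big1 ?mulr1.
  by apply: eq_bigr => j _; rewrite /F eqxx.
move=> l /negbTE lr; rewrite -[RHS]q_sum1.
by apply: eq_bigr => j _; rewrite /F lr mulr1.
Qed.

Lemma sum_sweight_coord2 r r' (g g' : 'I_d -> R) : r != r' ->
  \sum_(s : {ffun 'I_k -> 'I_d}) sweight q s * (g (s r) * g' (s r')) =
  (\sum_(j < d) q j * g j) * (\sum_(j < d) q j * g' j).
Proof.
move=> rr'; pose F l j := if l == r then g j else if l == r' then g' j else 1.
have Fl l : l != r -> l != r' -> F l =1 fun=> 1 by rewrite /F => /negbTE-> /negbTE->.
have Fr s : g (s r) * g' (s r') = \prod_(l < k) F l (s l).
  rewrite (bigD1 r) // (bigD1 r') 1?eq_sym //= /F eqxx eq_sym (negbTE rr') eqxx.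
  by rewrite big1 ?mulr1 // => l /andP[lr lr']; rewrite -/(F l (s l)) Fl.
under eq_bigr do rewrite Fr.
rewrite sum_sweight_prod (bigD1 r) // (bigD1 r') 1?eq_sym //= [X in _ * (_ * X)]big1 ?mulr1.
  by rewrite /F eqxx eq_sym (negbTE rr') eqxx.
by move=> l /andP[lr lr']; under eq_bigr do rewrite Fl // mulr1.
Qed.

Hypothesis k_gt0 : (0 < k)%N.

Lemma sum_sweight_avg (g : 'I_d -> R) :
  \sum_(s : {ffun 'I_k -> 'I_d}) sweight q s * (k%:R^-1 * \sum_(r < k) g (s r)) =
  \sum_(j < d) q j * g j.
Proof.
under eq_bigr do rewrite mulrCA mulr_sumr.
rewrite -mulr_sumr exchange_big /=.
under eq_bigr do rewrite sum_sweight_coord.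
rewrite sumr_const card_ord -[X in _ * X]mulr_natl mulrA mulVf ?mul1r //.
by rewrite pnatr_eq0 -lt0n.
Qed.

(* The [k] draws are independent: the [k] diagonal pairs contribute the
   second moment and the [k (k - 1)] off-diagonal ones the squared mean. *)
Lemma sum_sweight_avg_sqr (g : 'I_d -> R) :
  \sum_(s : {ffun 'I_k -> 'I_d}) sweight q s * (k%:R^-1 * \sum_(r < k) g (s r)) ^+ 2 =
  k%:R^-1 * \sum_(j < d) q j * g j ^+ 2 +
  (1 - k%:R^-1) * (\sum_(j < d) q j * g j) ^+ 2.
Proof.
set A := \sum_(j < d) q j * g j ^+ 2; set M := \sum_(j < d) q j * g j.
have pair r r' : \sum_(s : {ffun 'I_k -> 'I_d}) sweight q s * (g (s r) * g (s r')) =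
    if r == r' then A else M ^+ 2.
  have [<-|rr'] := eqVneq r r'; last by rewrite expr2 sum_sweight_coord2.
  rewrite /A -(sum_sweight_coord r (fun j => g j ^+ 2)).
  by apply: eq_bigr => s _; rewrite expr2.
have row r : \sum_(s : {ffun 'I_k -> 'I_d}) sweight q s * \sum_(r' < k) g (s r) * g (s r') =
    A + (k.-1)%:R * M ^+ 2.
  under eq_bigr do rewrite mulr_sumr.
  rewrite exchange_big (bigD1 r) //= pair eqxx.
  under eq_bigr => r' rr' do rewrite pair eq_sym (negbTE rr').
  by rewrite sumr_const cardC1 card_ord mulr_natl.
have sqr_sum s : (k%:R^-1 * \sum_(r < k) g (s r)) ^+ 2 =
    k%:R^-1 ^+ 2 * \sum_(r < k) \sum_(r' < k) g (s r) * g (s r').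
  rewrite exprMn; congr (_ * _).
  by rewrite expr2 mulr_suml; apply: eq_bigr => r _; rewrite mulr_sumr.
under eq_bigr do rewrite sqr_sum mulrCA mulr_sumr.
rewrite -mulr_sumr exchange_big /=.
under eq_bigr do rewrite row.
rewrite sumr_const card_ord -mulr_natl -[in (k.-1)%:R]subn1 natrB // .
by field; rewrite pnatr_eq0 -lt0n.
Qed.

Definition iw_coord x (j : 'I_d) := (q j)^-1 * x 0 j.

Lemma q_mul_iw_coord x j : (q j = 0 -> x 0 j = 0) -> q j * iw_coord x j = x 0 j.
Proof.
rewrite /iw_coord mulrA; have [->/(_ erefl)->|qj _] := eqVneq (q j) 0.
  by rewrite mulr0.
by rewrite divff ?mul1r.
Qed.

Lemma sum_mul_delta (a : 'I_d -> R) i : \sum_(j < d) a j * (j == i)%:R = a i.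
Proof.
by rewrite (bigD1 i) //= eqxx mulr1 big1 ?addr0 // => j /negbTE ->; rewrite mulr0.
Qed.

Lemma xtilde_coord s x i :
  xtilde q s x 0 i = k%:R^-1 * \sum_(r < k) iw_coord x (s r) * (i == s r)%:R.
Proof.
rewrite /xtilde mxE summxE; congr (_ * _); apply: eq_bigr => r _.
by rewrite !mxE eqxx.
Qed.

Section Support.
Variable x : 'rV[R]_d.
Hypothesis x_supp : forall j, q j = 0 -> x 0 j = 0.

Lemma mean_dotv_xtilde u :
  \sum_(s : {ffun 'I_k -> 'I_d}) sweight q s * dotv (xtilde q s x) u = dotv x u.
Proof.
have E s : dotv (xtilde q s x) u = k%:R^-1 * \sum_(r < k) iw_coord x (s r) * u 0 (s r).
  rewrite /dotv; under eq_bigr do rewrite xtilde_coord -mulrA mulr_suml.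
  rewrite -mulr_sumr exchange_big /=; congr (_ * _); apply: eq_bigr => r _.
  under eq_bigr do rewrite mulrAC.
  by rewrite sum_mul_delta.
under eq_bigr do rewrite E.
rewrite (sum_sweight_avg (fun j => iw_coord x j * u 0 j)); apply: eq_bigr => j _.
by rewrite mulrA (q_mul_iw_coord (@x_supp j)).
Qed.

Lemma mean_sqnorm_xtilde :
  \sum_(s : {ffun 'I_k -> 'I_d}) sweight q s * sqnorm (xtilde q s x) =
  k%:R^-1 * \sum_(j < d) q j * iw_coord x j ^+ 2 + (1 - k%:R^-1) * sqnorm x.
Proof.
pose g i j := iw_coord x j * (i == j)%:R.
have E s : sqnorm (xtilde q s x) = \sum_(i < d) (k%:R^-1 * \sum_(r < k) g i (s r)) ^+ 2.
  by apply: eq_bigr => i _; rewrite xtilde_coord -expr2.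
under eq_bigr do rewrite E mulr_sumr.
rewrite exchange_big /=.
under eq_bigr do rewrite sum_sweight_avg_sqr.
rewrite big_split /= -!mulr_sumr; congr (_ * _ + _ * _).
  apply: eq_bigr => i _; rewrite (bigD1 i) //= big1 ?addr0 /g ?eqxx ?mulr1 //.
  by move=> j; rewrite eq_sym => /negbTE ->; rewrite mulr0 expr0n /= mulr0.
apply: eq_bigr => i _; rewrite -expr2; congr (_ ^+ 2).
under eq_bigr do rewrite mulrA eq_sym.
by rewrite sum_mul_delta (q_mul_iw_coord (@x_supp i)).
Qed.

End Support.
End IndexSampling.

Section PhiSampling.
Variables (R : realType) (d : nat).
Implicit Types (w x : 'rV[R]_d) (y : R) (F G : R -> R).

Definition mean_phi w x y F : R :=
  if w == 0 then F (- y)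
  else \sum_(j < d) pj w j * F (w 0 j / pj w j * x 0 j - y).

Lemma avg_phi_EFin w x y F :
  avg_phi w x y (fun p => (F p)%:E) = (mean_phi w x y F)%:E.
Proof. by rewrite /avg_phi /mean_phi; case: ifP => // _; rewrite sumEFin. Qed.

Lemma pj_ge0 w j : 0 <= pj w j.
Proof. by rewrite /pj divr_ge0 ?sqr_ge0. Qed.

Lemma pj_sum w : w != 0 -> \sum_(j < d) pj w j = 1.
Proof.
move=> w0; rewrite /pj -mulr_suml norm2_sqr.
by under eq_bigr do rewrite expr2; rewrite divff // gt_eqF // sqnorm_gt0.
Qed.

Lemma pj_mul_ratio w j : w != 0 -> pj w j * (w 0 j / pj w j) = w 0 j.
Proof.
move=> w0; have [->|wj] := eqVneq (w 0 j) 0; first by rewrite mul0r mulr0.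
rewrite mulrCA divff ?mulr1 // /pj mulf_neq0 ?sqrf_eq0 // invr_eq0.
by rewrite norm2_sqr gt_eqF // sqnorm_gt0.
Qed.

Lemma pj_mul_ratio_sqr_le w j : w != 0 -> pj w j * (w 0 j / pj w j) ^+ 2 <= sqnorm w.
Proof.
move=> w0; rewrite expr2 mulrA pj_mul_ratio //.
have [->|wj] := eqVneq (w 0 j) 0; first by rewrite !mul0r sqnorm_ge0.
have n0 : norm2 w != 0 by rewrite -sqrf_eq0 norm2_sqr gt_eqF ?sqnorm_gt0.
rewrite (_ : w 0 j * (w 0 j / pj w j) = sqnorm w) //.
by rewrite /pj -norm2_sqr; field; rewrite n0 wj.
Qed.

Lemma avg_phi_ge0 w x y (H : R -> \bar R) :
  (forall p, (0 <= H p)%E) -> (0 <= avg_phi w x y H)%E.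
Proof.
move=> H0; rewrite /avg_phi; case: ifP => // _.
by apply: sume_ge0 => j _; rewrite mule_ge0 // lee_fin pj_ge0.
Qed.

Lemma le_avg_phi w x y (H H' : R -> \bar R) :
  (forall p, (H p <= H' p)%E) -> (avg_phi w x y H <= avg_phi w x y H')%E.
Proof.
move=> HH'; rewrite /avg_phi; case: ifP => // _.
by apply: lee_sum => j _; rewrite lee_wpmul2l // lee_fin pj_ge0.
Qed.

Lemma mean_phi_ge0 w x y F : (forall p, 0 <= F p) -> 0 <= mean_phi w x y F.
Proof.
move=> F0; rewrite /mean_phi; case: ifP => // _.
by apply: sumr_ge0 => j _; rewrite mulr_ge0 ?pj_ge0.
Qed.

Lemma ler_mean_phi w x y F G :
  (forall p, F p <= G p) -> mean_phi w x y F <= mean_phi w x y G.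
Proof.
move=> FG; rewrite /mean_phi; case: ifP => // _.
by apply: ler_sum => j _; rewrite ler_wpM2l ?pj_ge0.
Qed.

Lemma eq_mean_phi w x y F G : F =1 G -> mean_phi w x y F = mean_phi w x y G.
Proof. by move=> /funext->. Qed.

Lemma mean_phi_affine w x y (a b : R) F :
  mean_phi w x y (fun p => a + b * F p) = a + b * mean_phi w x y F.
Proof.
rewrite /mean_phi; case: ifPn => // w0.
under eq_bigr do rewrite mulrDr mulrCA.
by rewrite big_split /= -mulr_suml pj_sum // mul1r mulr_sumr.
Qed.

Lemma mean_phi_quad w x y (a b c : R) :
  mean_phi w x y (fun p => a + b * p + c * p ^+ 2) =
  a + b * mean_phi w x y id + c * mean_phi w x y (fun p => p ^+ 2).
Proof.
rewrite /mean_phi; case: ifPn => // w0.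
transitivity (\sum_(j < d) (a * pj w j
    + b * (pj w j * (w 0 j / pj w j * x 0 j - y))
    + c * (pj w j * (w 0 j / pj w j * x 0 j - y) ^+ 2))).
  by apply: eq_bigr => j _; ring.
by rewrite !big_split /= -!mulr_sumr pj_sum // mulr1.
Qed.

Lemma mean_phi_id w x y : mean_phi w x y id = dotv w x - y.
Proof.
rewrite /mean_phi; case: ifPn => [/eqP->|w0]; first by rewrite dotv0l add0r.
under eq_bigr do rewrite mulrBr mulrA pj_mul_ratio // (mulrC _ y).
by rewrite sumrB -mulr_sumr pj_sum // mulr1.
Qed.

Lemma mean_phi_sqr_le w x y (b : R) : norm2 w <= b -> norm2 x <= 1 -> `|y| <= b ->
  mean_phi w x y (fun p => p ^+ 2) <= 4 * b ^+ 2.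
Proof.
move=> wb x1 yb; have b0 : 0 <= b := le_trans (normr_ge0 y) yb.
have y2 : y ^+ 2 <= b ^+ 2 by rewrite -real_normK ?num_real // ler_sqr ?nnegrE.
rewrite /mean_phi; case: ifPn => [_|w0]; first by rewrite sqrrN; nra.
have xx : sqnorm x <= 1 by rewrite -(expr1n _ 2) sqnorm_le.
have ww : sqnorm w <= b ^+ 2 := sqnorm_le wb.
have wx : dotv w x ^+ 2 <= b ^+ 2.
  apply: le_trans (cauchy_schwarz_sqr w x) _.
  by have := sqnorm_ge0 w; have := sqnorm_ge0 x; nra.
have main : \sum_(j < d) pj w j * (w 0 j / pj w j) ^+ 2 * x 0 j ^+ 2 <= b ^+ 2.
  apply: le_trans (_ : sqnorm w * sqnorm x <= _); last first.
    by have := sqnorm_ge0 w; have := sqnorm_ge0 x; nra.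
  rewrite mulr_sumr; apply: ler_sum => j _; rewrite -expr2.
  by rewrite ler_wpM2r ?sqr_ge0 ?pj_mul_ratio_sqr_le.
have -> : \sum_(j < d) pj w j * (w 0 j / pj w j * x 0 j - y) ^+ 2 =
    \sum_(j < d) pj w j * (w 0 j / pj w j) ^+ 2 * x 0 j ^+ 2
    - 2 * y * \sum_(j < d) pj w j * (w 0 j / pj w j) * x 0 j
    + y ^+ 2 * \sum_(j < d) pj w j.
  by rewrite !mulr_sumr -sumrB -big_split /=; apply: eq_bigr => j _; ring.
rewrite pj_sum // mulr1.
under [X in _ - _ * X]eq_bigr do rewrite pj_mul_ratio //.
rewrite -/(dotv w x).
nra.
Qed.

End PhiSampling.

Lemma sqloss_sub_le (R : realType) (d : nat) (w wstar x : 'rV[R]_d) (y : R) :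
  sqloss w x y - sqloss wstar x y <= (dotv w x - y) * dotv x (w - wstar).
Proof.
rewrite /sqloss dotvBr (dotvC x w) (dotvC x wstar).
by have := sqr_ge0 (dotv w x - dotv wstar x); nra.
Qed.

Section OneStep.
Variables (R : realType) (d k : nat) (q : 'I_d -> R) (B eta : R).
Hypothesis q_sum1 : \sum_(j < d) q j = 1.
Hypothesis q_ge0 : forall j, 0 <= q j.
Hypothesis k_gt0 : (0 < k)%N.
Hypothesis B_gt0 : 0 < B.
Hypothesis eta_gt0 : 0 < eta.
Implicit Types (w wstar x : 'rV[R]_d) (y : R).

Definition mean_next_sqdist w wstar x y : R :=
  \sum_(s : {ffun 'I_k -> 'I_d}) sweight q s *
    mean_phi w x y (fun p => sqnorm (update B eta w p (xtilde q s x) - wstar)).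

Definition grad_sqr_bound x : R :=
  4 * B ^+ 2 * (k%:R^-1 * \sum_(j < d) q j * iw_coord q x j ^+ 2 + 1).

Lemma mean_next_sqdist_ge0 w wstar x y : 0 <= mean_next_sqdist w wstar x y.
Proof.
apply: sumr_ge0 => s _; rewrite mulr_ge0 ?sweight_ge0 //.
by apply: mean_phi_ge0 => p; exact: sqnorm_ge0.
Qed.

Lemma mean_sqnorm_xtilde_le x : norm2 x <= 1 -> (forall j, q j = 0 -> x 0 j = 0) ->
  \sum_(s : {ffun 'I_k -> 'I_d}) sweight q s * sqnorm (xtilde q s x) <=
  k%:R^-1 * \sum_(j < d) q j * iw_coord q x j ^+ 2 + 1.
Proof.
move=> x1 x_supp; rewrite mean_sqnorm_xtilde // lerD2l.
have xx : sqnorm x <= 1 by rewrite -(expr1n _ 2) sqnorm_le.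
have k1 : k%:R^-1 <= 1 :> R by rewrite invf_le1 ?ltr0n // ler1n.
have k0 : 0 <= k%:R^-1 :> R by rewrite invr_ge0 ler0n.
by have := sqnorm_ge0 x; nra.
Qed.

(* The projection is nonexpansive, and [phi] and [xtilde] are unbiased and drawn
   independently. *)
Lemma mean_next_sqdist_le w wstar x y :
  norm2 wstar <= B -> (forall j, q j = 0 -> x 0 j = 0) ->
  mean_next_sqdist w wstar x y <=
  sqnorm (w - wstar) - 2 * eta * ((dotv w x - y) * dotv x (w - wstar))
  + eta ^+ 2 * mean_phi w x y (fun p => p ^+ 2) *
    \sum_(s : {ffun 'I_k -> 'I_d}) sweight q s * sqnorm (xtilde q s x).
Proof.
move=> wsB x_supp; set a := w - wstar.
have proj s p : sqnorm (update B eta w p (xtilde q s x) - wstar) <=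
    sqnorm a + (- 2 * eta * dotv a (xtilde q s x)) * p
    + (eta ^+ 2 * sqnorm (xtilde q s x)) * p ^+ 2.
  rewrite updateE; apply: le_trans (ball_proj_nonexpansive _ B_gt0 wsB) _.
  rewrite addrAC scalerA sqnormBZ le_eqVlt; apply: predU1l; ring.
apply: le_trans (_ : \sum_(s : {ffun 'I_k -> 'I_d}) sweight q s *
    (sqnorm a + (- 2 * eta * dotv a (xtilde q s x)) * (dotv w x - y)
     + (eta ^+ 2 * sqnorm (xtilde q s x)) * mean_phi w x y (fun p => p ^+ 2)) <= _).
  apply: ler_sum => s _; rewrite ler_wpM2l ?sweight_ge0 //.
  by rewrite -mean_phi_id -mean_phi_quad; apply: ler_mean_phi => p; exact: proj.
set E2 := mean_phi w x y _.
have -> : \sum_(s : {ffun 'I_k -> 'I_d}) sweight q s *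
    (sqnorm a + (- 2 * eta * dotv a (xtilde q s x)) * (dotv w x - y)
     + (eta ^+ 2 * sqnorm (xtilde q s x)) * E2) =
    sqnorm a * \sum_(s : {ffun 'I_k -> 'I_d}) sweight q s
    - 2 * eta * (dotv w x - y) *
      \sum_(s : {ffun 'I_k -> 'I_d}) sweight q s * dotv (xtilde q s x) a
    + eta ^+ 2 * E2 *
      \sum_(s : {ffun 'I_k -> 'I_d}) sweight q s * sqnorm (xtilde q s x).
  rewrite !mulr_sumr -sumrN -!big_split /=.
  by apply: eq_bigr => s _; rewrite (dotvC a); ring.
rewrite sweight_sum // mean_dotv_xtilde // le_eqVlt; apply: predU1l; ring.
Qed.

Lemma sgd_step_bound w wstar x y :
  norm2 w <= B -> norm2 wstar <= B -> norm2 x <= 1 -> `|y| <= B ->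
  (forall j, q j = 0 -> x 0 j = 0) ->
  mean_next_sqdist w wstar x y / (2 * eta) + sqloss w x y <=
  sqnorm (w - wstar) / (2 * eta) + eta / 2 * grad_sqr_bound x + sqloss wstar x y.
Proof.
move=> wB wsB x1 yB x_supp; set g := (dotv w x - y) * dotv x (w - wstar).
have e2 : 0 < 2 * eta by rewrite mulr_gt0.
have grad : mean_phi w x y (fun p => p ^+ 2) *
    \sum_(s : {ffun 'I_k -> 'I_d}) sweight q s * sqnorm (xtilde q s x)
    <= grad_sqr_bound x.
  apply: ler_pM; first by apply: mean_phi_ge0 => p; exact: sqr_ge0.
  - by apply: sumr_ge0 => s _; rewrite mulr_ge0 ?sweight_ge0 ?sqnorm_ge0.
  - exact: mean_phi_sqr_le.
  - exact: mean_sqnorm_xtilde_le.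
have next : mean_next_sqdist w wstar x y / (2 * eta) <=
    (sqnorm (w - wstar) - 2 * eta * g + eta ^+ 2 * grad_sqr_bound x) / (2 * eta).
  rewrite ler_wpM2r ?invr_ge0 ?(ltW e2) //.
  apply: le_trans (mean_next_sqdist_le w y wsB x_supp) _.
  by rewrite lerD2l -mulrA ler_wpM2l ?sqr_ge0.
have split : (sqnorm (w - wstar) - 2 * eta * g + eta ^+ 2 * grad_sqr_bound x)
    / (2 * eta) = sqnorm (w - wstar) / (2 * eta) - g + eta / 2 * grad_sqr_bound x.
  by field; rewrite gt_eqF.
by move: next; rewrite split; have := sqloss_sub_le w wstar x y; rewrite -/g; lra.
Qed.

End OneStep.

Section Integration.
Local Open Scope classical_set_scope.
Variables (R : realType) (dT : measure_display) (T : measurableType dT).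
Variable P : probability T R.
Import HBNNSimple.

Lemma integral_cst_probability (c : R) : (\int[P]_t c%:E)%E = c%:E.
Proof.
rewrite integral_cst //; apply: (@eq_trans _ _ (c%:E * 1)%E); last by rewrite mule1.
by congr (_ * _)%E; exact: probability_setT.
Qed.

Lemma integrable_ae_bounded (f : T -> R) (c : R) : 0 <= c -> measurable_fun setT f ->
  {ae P, forall t, `|f t| <= c} -> P.-integrable setT (EFin \o f).
Proof.
move=> c0 mf fc; apply/integrableP; split; first exact: measurableT_comp.
apply: le_lt_trans (_ : _ <= c%:E * P setT)%E _.
  apply: integral_le_bound => //; first exact: measurableT_comp.
  by apply: filterS fc => t ft _; rewrite lee_fin.
by rewrite probability_setT mule1 ltry.
Qed.

(* [f] is not assumed measurable: its integral is the supremum of the integrals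
   of the simple functions below it, each of which is below [g] a.e. *)
Lemma integral_le_ae_EFin (f : T -> \bar R) (g : T -> R) :
  (forall t, (0 <= f t)%E) -> measurable_fun setT g ->
  {ae P, forall t, (f t <= (g t)%:E)%E} ->
  (\int[P]_t f t <= \int[P]_t (g t)%:E)%E.
Proof.
move=> f0 mg fg.
have mG : measurable_fun setT (EFin \o g) by exact: measurableT_comp.
have g_ge0 : {ae P, forall t, (0 <= (g t)%:E)%E}.
  by apply: filterS fg => t; exact: le_trans (f0 t).
have neg0 : (\int[P]_t (funeneg (EFin \o g) t) = 0)%E.
  apply/eqP; rewrite eq_le integral_ge0 => [|t _]; last exact: funeneg_ge0.
  rewrite andbT -(integral0 P setT); apply: ae_ge0_le_integral => //.
  - exact: measurable_funeneg.
  - apply: filterS g_ge0 => t gt _; rewrite funenegE /=.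
    by rewrite ge_max lexx andbT lee_fin oppr_le0 -lee_fin.
rewrite ge0_integralTE //; apply: ge_ereal_sup => _ [h hf <-].
have := integral_nnsfun P measurableT h; rewrite patch_setT => <-.
rewrite [leRHS]integralE neg0 sube0; apply: ae_ge0_le_integral => //.
- by move=> t _; rewrite lee_fin.
- by apply/measurable_EFinP; exact: measurable_funP.
- exact: measurable_funepos.
- apply: filterS fg => t ft _; rewrite funeposE /=.
  by rewrite le_max (le_trans (hf t) ft).
Qed.

Definition has_integral (g : T -> R) (I : R) :=
  P.-integrable setT (EFin \o g) /\ (\int[P]_t (g t)%:E = I%:E)%E.

Lemma has_integral_ext g g' I : g =1 g' -> has_integral g I -> has_integral g' I.
Proof. by move=> /funext <-. Qed.

Lemma has_integral_cst c : has_integral (fun=> c) c.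
Proof.
split; last exact: integral_cst_probability.
apply/integrableP; split; first exact: measurable_cst.
by rewrite integral_cst_probability ltry.
Qed.

Lemma has_integralD g g' I I' : has_integral g I -> has_integral g' I' ->
  has_integral (fun t => g t + g' t) (I + I').
Proof.
move=> [ig eg] [ig' eg']; split; first exact: (integrableD measurableT ig ig').
by rewrite (integralD_EFin measurableT ig ig') eg eg'.
Qed.

Lemma has_integralZ a g I : has_integral g I -> has_integral (fun t => a * g t) (a * I).
Proof.
move=> [ig eg]; split; first exact: (integrableZl measurableT a ig).
by rewrite (_ : (fun t => _) = (fun t => a%:E * (g t)%:E)%E) ?integralZl ?eg.
Qed.

Lemma has_integralB g g' I I' : has_integral g I -> has_integral g' I' ->
  has_integral (fun t => g t - g' t) (I - I').
Proof.
move=> hg /(has_integralZ (-1)) hg'; rewrite -mulN1r.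
by apply: has_integral_ext (has_integralD hg hg') => t; rewrite mulN1r.
Qed.

Lemma has_integral_sum (A : Type) (s : seq A) (F : A -> T -> R) (I : A -> R) :
  (forall a, has_integral (F a) (I a)) ->
  has_integral (fun t => \sum_(a <- s) F a t) (\sum_(a <- s) I a).
Proof.
move=> hF; elim: s => [|a s IHs].
  by rewrite big_nil; apply: has_integral_ext (has_integral_cst 0) => t; rewrite big_nil.
rewrite big_cons; apply: has_integral_ext (has_integralD (hF a) IHs) => t.
by rewrite big_cons.
Qed.

Lemma has_integral_measurable g I : has_integral g I -> measurable_fun setT g.
Proof. by move=> [ig _]; apply/measurable_EFinP; exact: measurable_int ig. Qed.

Lemma integral_le_has_integral (f : T -> \bar R) g I :
  (forall t, (0 <= f t)%E) -> has_integral g I ->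
  {ae P, forall t, (f t <= (g t)%:E)%E} -> (\int[P]_t f t <= I%:E)%E.
Proof.
move=> f0 hg fg; case: (hg) => _ <-.
exact: integral_le_ae_EFin (has_integral_measurable hg) fg.
Qed.

End Integration.

Section Averaging.
Variables (R : realType) (d : nat).

Lemma sumr_const_seq (A : Type) (s : seq A) (c : R) :
  \sum_(a <- s) c = (size s)%:R * c.
Proof.
elim: s => [|a s IHs]; first by rewrite big_nil mul0r.
by rewrite big_cons IHs /= -addn1 natrD mulrDl mul1r addrC.
Qed.

Lemma sqr_sum_seq_le (A : Type) (s : seq A) (b : A -> R) :
  (\sum_(a <- s) b a) ^+ 2 <= (size s)%:R * \sum_(a <- s) b a ^+ 2.
Proof.
have [/size0nil->|s_gt0] := posnP (size s); first by rewrite !big_nil expr0n mulr0.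
set n : R := (size s)%:R; set S := \sum_(a <- s) b a.
have n_gt0 : 0 < n by rewrite ltr0n.
have : 0 <= \sum_(a <- s) (b a - S / n) ^+ 2 by apply: sumr_ge0 => a _; exact: sqr_ge0.
have -> : \sum_(a <- s) (b a - S / n) ^+ 2 =
    \sum_(a <- s) b a ^+ 2 - 2 * (S / n) * S + n * (S / n) ^+ 2.
  rewrite -sumr_const_seq /S mulr_sumr -sumrB -big_split /=.
  by apply: eq_bigr => a _; ring.
have -> : \sum_(a <- s) b a ^+ 2 - 2 * (S / n) * S + n * (S / n) ^+ 2 =
    \sum_(a <- s) b a ^+ 2 - S ^+ 2 / n by field; rewrite gt_eqF.
by rewrite subr_ge0 ler_pdivrMr // mulrC.
Qed.

Lemma sqloss_avg_iter_le (s : seq 'rV[R]_d) x (y : R) : (0 < size s)%N ->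
  sqloss (avg_iter s) x y <= (size s)%:R^-1 * \sum_(u <- s) sqloss u x y.
Proof.
move=> s_gt0; set n : R := (size s)%:R; have n_gt0 : 0 < n by rewrite ltr0n.
rewrite /sqloss; have -> : dotv (avg_iter s) x - y = n^-1 * \sum_(u <- s) (dotv u x - y).
  rewrite /avg_iter dotvZl dotv_suml sumrB sumr_const_seq -/n.
  by field; rewrite gt_eqF.
rewrite -mulr_sumr [leRHS]mulrCA ler_wpM2l ?invr_ge0 ?ler0n // exprMn.
rewrite expr2 -mulrA ler_pM2l ?invr_gt0 // ler_pdivrMl //.
exact: sqr_sum_seq_le.
Qed.

End Averaging.

Section Model.
Local Open Scope classical_set_scope.
Variables (R : realType) (d : nat) (dT : measure_display) (T : measurableType dT).
Variables (P : probability T R) (X : T -> 'rV[R]_d) (Y : T -> R) (B : R).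
Hypothesis mX : forall i : 'I_d, measurable_fun setT (fun t => X t 0 i).
Hypothesis mY : measurable_fun setT Y.
Hypothesis X_le1 : {ae P, forall t, norm2 (X t) <= 1}.
Hypothesis Y_le : {ae P, forall t, `|Y t| <= B}.

Lemma measurable_sqloss u : measurable_fun setT (fun t => sqloss u (X t) (Y t)).
Proof.
have mdot : measurable_fun setT (fun t => dotv u (X t) - Y t).
  apply: measurable_funB mY; apply: measurable_sum => i.
  by apply: measurable_funM => //; exact: measurable_cst.
apply: measurable_funM; first exact: measurable_cst.
by rewrite /GRing.exp /=; exact: measurable_funM.
Qed.

Lemma has_integral_second_moment j :
  has_integral P (fun t => X t 0 j ^+ 2) (second_moment P X j).
Proof.
have ij : P.-integrable setT (EFin \o (fun t => X t 0 j ^+ 2)).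
  apply: (@integrable_ae_bounded _ _ _ _ _ 1) => //.
    by rewrite /GRing.exp /=; exact: measurable_funM.
  apply: filterS X_le1 => t xt; rewrite ger0_norm ?sqr_ge0 //.
  by apply: le_trans (coord_sqr_le_sqnorm _ j) _; rewrite -(expr1n R 2) sqnorm_le.
by split; rewrite // /second_moment fineK // (integrable_fin_num measurableT ij).
Qed.

Lemma has_integral_sqloss u :
  has_integral P (fun t => sqloss u (X t) (Y t)) (fine (risk P X Y u)).
Proof.
have iu : P.-integrable setT (EFin \o (fun t => sqloss u (X t) (Y t))).
  apply: (@integrable_ae_bounded _ _ _ _ _ (sqnorm u + B ^+ 2)).
  - by rewrite addr_ge0 ?sqnorm_ge0 ?sqr_ge0.
  - exact: measurable_sqloss.
  apply: filterS2 X_le1 Y_le => t xt yt; rewrite ger0_norm ?sqloss_ge0 // /sqloss.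
  have xx : sqnorm (X t) <= 1 by rewrite -(expr1n R 2) sqnorm_le.
  have uu := sqnorm_ge0 u.
  have yy : Y t ^+ 2 <= B ^+ 2.
    by rewrite -real_normK ?num_real // ler_sqr ?nnegrE // (le_trans _ yt).
  have : dotv u (X t) ^+ 2 <= sqnorm u.
    by apply: le_trans (cauchy_schwarz_sqr _ _) _; nra.
  by have := sqr_ge0 (dotv u (X t) + Y t); nra.
by split; rewrite // /risk fineK // (integrable_fin_num measurableT iu).
Qed.

Lemma risk_fineK u : risk P X Y u = (fine (risk P X Y u))%:E.
Proof. by case: (has_integral_sqloss u) => _ <-. Qed.

Lemma second_moment_eq0 j : second_moment P X j = 0 -> {ae P, forall t, X t 0 j = 0}.
Proof.
move=> mj; have [ij int_j] := has_integral_second_moment j.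
pose g t := X t 0 j ^+ 2.
have : (\int[P]_t `|(EFin \o g) t| = 0)%E.
  rewrite (_ : 0%E = (second_moment P X j)%:E); last by rewrite mj.
  rewrite -int_j.
  by apply: eq_integral => t _; rewrite /= ger0_norm ?sqr_ge0.
move/(ae_eq_integral_abs P measurableT (measurable_int P ij)).
apply: filterS => t /(_ I) /= [/eqP].
by rewrite sqrf_eq0 => /eqP.
Qed.

Variables (eta : R) (q : 'I_d -> R) (k m : nat) (wstar : 'rV[R]_d).
Hypothesis q_sum1 : \sum_(j < d) q j = 1.
Hypothesis q_ge0 : forall j, 0 <= q j.
Hypothesis k_gt0 : (0 < k)%N.
Hypothesis B_gt0 : 0 < B.
Hypothesis eta_gt0 : 0 < eta.
Hypothesis wstar_le : norm2 wstar <= B.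
Hypothesis m_gt0 : (0 < m)%N.
Hypothesis X_supp : {ae P, forall t j, q j = 0 -> X t 0 j = 0}.

Definition grad_moment : R := 4 * B ^+ 2 *
  (k%:R^-1 * \sum_(j < d) q j * (q j)^-1 ^+ 2 * second_moment P X j + 1).

Lemma has_integral_grad_sqr_bound :
  has_integral P (fun t => grad_sqr_bound k q B (X t)) grad_moment.
Proof.
pose a j := 4 * B ^+ 2 * k%:R^-1 * (q j * (q j)^-1 ^+ 2).
have -> : grad_moment = \sum_(j < d) a j * second_moment P X j + 4 * B ^+ 2.
  rewrite /grad_moment mulrDr mulr1 !mulr_sumr; congr (_ + _).
  by apply: eq_bigr => j _; rewrite /a; ring.
apply: (has_integral_ext (g := fun t => \sum_(j < d) a j * X t 0 j ^+ 2 + 4 * B ^+ 2)).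
  move=> t; rewrite /grad_sqr_bound /iw_coord mulrDr mulr1 !mulr_sumr; congr (_ + _).
  by apply: eq_bigr => j _; rewrite /a exprMn; ring.
apply: has_integralD (has_integral_cst _ _); apply: has_integral_sum => j.
exact/has_integralZ/has_integral_second_moment.
Qed.

Lemma step_bound_ae w : norm2 w <= B ->
  {ae P, forall t, mean_next_sqdist k q B eta w wstar (X t) (Y t) / (2 * eta)
     + sqloss w (X t) (Y t) <= sqnorm (w - wstar) / (2 * eta)
     + eta / 2 * grad_sqr_bound k q B (X t) + sqloss wstar (X t) (Y t)}.
Proof.
by move=> wB; apply: filterS3 X_le1 Y_le X_supp => t *; exact: sgd_step_bound.
Qed.

Definition risk_avg (ws : seq 'rV[R]_d) := risk P X Y (avg_iter ws).

Lemma run_exp_ge0 n ws : (0 <= run_exp P X Y B eta q k risk_avg n ws)%E.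
Proof.
elim: n ws => [|n IHn] ws /=.
  by apply: integral_ge0 => t _; rewrite lee_fin sqloss_ge0.
apply: integral_ge0 => t _; apply: sume_ge0 => s _.
by rewrite mule_ge0 ?lee_fin ?sweight_ge0 ?avg_phi_ge0.
Qed.

(* Bound on the expected risk of the final average when the iterates so far are
   [rcons ws w] and [n] rounds remain: each recursion step of [run_exp] consumes
   one term of the telescoping sum of the SGD analysis. *)
Definition potential n (ws : seq 'rV[R]_d) (w : 'rV[R]_d) : R :=
  m%:R^-1 * (\sum_(u <- ws) fine (risk P X Y u) + n.+1%:R * fine (risk P X Y wstar)
    + sqnorm (w - wstar) / (2 * eta) + n.+1%:R * (eta / 2 * grad_moment)).

Lemma has_integral_step_rhs c :
  has_integral P
    (fun t => c + eta / 2 * grad_sqr_bound k q B (X t) + sqloss wstar (X t) (Y t))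
    (c + eta / 2 * grad_moment + fine (risk P X Y wstar)).
Proof.
apply: has_integralD (has_integral_sqloss _).
exact/has_integralD/has_integralZ/has_integral_grad_sqr_bound/has_integral_cst.
Qed.

Lemma risk_avg_le_potential ws w : norm2 w <= B -> (size ws).+1 = m ->
  (risk_avg (rcons ws w) <= (potential 0 ws w)%:E)%E.
Proof.
move=> wB sz; have sz' : size (rcons ws w) = m by rewrite size_rcons.
have avg : (risk_avg (rcons ws w) <=
    (m%:R^-1 * \sum_(u <- rcons ws w) fine (risk P X Y u))%:E)%E.
  apply: integral_le_has_integral.
  - by move=> t; rewrite lee_fin sqloss_ge0.
  - by apply/has_integralZ/has_integral_sum => u; exact: has_integral_sqloss.
  - by apply: aeW => t; rewrite lee_fin -sz' sqloss_avg_iter_le ?sz'.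
have last : fine (risk P X Y w) <=
    sqnorm (w - wstar) / (2 * eta) + eta / 2 * grad_moment + fine (risk P X Y wstar).
  rewrite -lee_fin; case: (has_integral_sqloss w) => _ <-.
  apply: integral_le_has_integral (has_integral_step_rhs _) _.
    by move=> t; rewrite lee_fin sqloss_ge0.
  apply: filterS (step_bound_ae wB) => t; rewrite lee_fin; apply: le_trans.
  by rewrite lerDr divr_ge0 ?mean_next_sqdist_ge0 // mulr_ge0 // ltW.
apply: le_trans avg _; rewrite lee_fin /potential -cats1 big_cat big_seq1 /=.
by rewrite ler_wpM2l ?invr_ge0 ?ler0n //; lra.
Qed.

Lemma mean_potential_next n ws w x y :
  \sum_(s : {ffun 'I_k -> 'I_d}) sweight q s * mean_phi w x y
      (fun p => potential n (rcons ws w) (update B eta w p (xtilde q s x))) =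
  potential n (rcons ws w) wstar
  + m%:R^-1 * (mean_next_sqdist k q B eta w wstar x y / (2 * eta)).
Proof.
have pot u : potential n (rcons ws w) u =
    potential n (rcons ws w) wstar + m%:R^-1 / (2 * eta) * sqnorm (u - wstar).
  by rewrite /potential subrr /sqnorm dotv0l; ring.
under eq_bigr do rewrite (eq_mean_phi _ _ _ (fun p => pot _)) mean_phi_affine mulrDr.
rewrite big_split /= -mulr_suml sweight_sum // mul1r; congr (_ + _).
by rewrite /mean_next_sqdist mulr_suml mulr_sumr; apply: eq_bigr => s _; ring.
Qed.

Lemma run_exp_le_potential n ws w : norm2 w <= B -> (size ws + n.+1)%N = m ->
  (run_exp P X Y B eta q k risk_avg n (rcons ws w) <= (potential n ws w)%:E)%E.
Proof.
elim: n ws w => [|n IHn] ws w wB sz.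
  by apply: risk_avg_le_potential wB _; rewrite -sz addn1.
rewrite /= last_rcons; set c := potential n (rcons ws w) wstar.
set r := fun u => fine (risk P X Y u).
have step_int : has_integral P (fun t => c + m%:R^-1 * ((sqnorm (w - wstar) / (2 * eta)
      + eta / 2 * grad_sqr_bound k q B (X t) + sqloss wstar (X t) (Y t))
      - sqloss w (X t) (Y t)))
    (c + m%:R^-1 * ((sqnorm (w - wstar) / (2 * eta) + eta / 2 * grad_moment + r wstar)
      - r w)).
  apply/has_integralD/has_integralZ/has_integralB/has_integral_sqloss.
    exact: has_integral_cst.
  exact: has_integral_step_rhs.
apply: le_trans (integral_le_has_integral _ step_int _) _.
- move=> t; apply: sume_ge0 => s _.
  by rewrite mule_ge0 ?lee_fin ?sweight_ge0 ?avg_phi_ge0 // => p; exact: run_exp_ge0.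
- apply: filterS (step_bound_ae wB) => t step.
  apply: (@le_trans _ _ (\sum_(s : {ffun 'I_k -> 'I_d}) (sweight q s)%:E *
      avg_phi w (X t) (Y t) (fun p =>
        (potential n (rcons ws w) (update B eta w p (xtilde q s (X t))))%:E))%E).
    apply: lee_sum => s _; rewrite lee_wpmul2l ?lee_fin ?sweight_ge0 //.
    apply: le_avg_phi => p; apply: IHn; first exact: norm2_ball_proj.
    by rewrite size_rcons -sz addSnnS.
  under eq_bigr do rewrite avg_phi_EFin -EFinM.
  rewrite sumEFin lee_fin mean_potential_next lerD2l ler_wpM2l ?invr_ge0 ?ler0n //.
  by move: step; rewrite /r; lra.
- rewrite lee_fin /c /r /potential -cats1 big_cat big_seq1 /= subrr /sqnorm dotv0l.
  by rewrite -[n.+2]addn1 natrD le_eqVlt; apply: predU1l; ring.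
Qed.

End Model.

Section DDAERR.
Variables (R : realType) (d : nat) (mom : 'I_d -> R).
Hypothesis mom_ge0 : forall j, 0 <= mom j.
Hypothesis sqrt_sum_gt0 : 0 < \sum_(j < d) Num.sqrt (mom j).

Lemma ddaerr_q_ge0 j : 0 <= ddaerr_q mom j.
Proof. by rewrite divr_ge0 ?sqrtr_ge0 ?ltW. Qed.

Lemma ddaerr_q_sum1 : \sum_(j < d) ddaerr_q mom j = 1.
Proof. by rewrite -mulr_suml divff ?gt_eqF. Qed.

Lemma ddaerr_q_eq0 j : ddaerr_q mom j = 0 -> mom j = 0.
Proof.
move/eqP; rewrite mulf_eq0 invr_eq0 (gt_eqF sqrt_sum_gt0) orbF sqrtr_eq0 => mj.
by apply/le_anti; rewrite mj mom_ge0.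
Qed.

(* The point of the DDAERR probabilities: they minimise [sum_j mom j / q j]
   over the simplex, with minimum [||mom||_{1/2}]. *)
Lemma ddaerr_importance_sum :
  \sum_(j < d) ddaerr_q mom j * (ddaerr_q mom j)^-1 ^+ 2 * mom j = half_norm mom.
Proof.
set S := \sum_(j < d) Num.sqrt (mom j).
rewrite /half_norm; under [X in X ^+ 2]eq_bigr do rewrite ger0_norm //.
rewrite -/S expr2 mulr_suml; apply: eq_bigr => j _; rewrite /ddaerr_q -/S.
have [mj|mj] := eqVneq (mom j) 0; first by rewrite mj sqrtr0 !mul0r.
have sj : 0 < Num.sqrt (mom j) by rewrite sqrtr_gt0 lt_neqAle eq_sym mj mom_ge0.
rewrite -{3}[mom j]sqr_sqrtr //; move: sj; set s := Num.sqrt (mom j) => sj.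
by field; rewrite !gt_eqF.
Qed.

End DDAERR.

Lemma second_moment_ge0 (R : realType) (d : nat) (dT : measure_display)
  (T : measurableType dT) (P : probability T R) (X : T -> 'rV[R]_d) j :
  0 <= second_moment P X j.
Proof. by rewrite fine_ge0 // integral_ge0 // => t _; rewrite lee_fin sqr_ge0. Qed.

Lemma step_size_balance (R : realType) (m G r D b : R) : 0 < m -> 0 < G -> D <= b ->
  m^-1 * (m * r + D / (2 * (Num.sqrt (m * G))^-1)
    + m * ((Num.sqrt (m * G))^-1 / 2 * (b * G))) <= r + b / Num.sqrt m * Num.sqrt G.
Proof.
move=> m0 G0 Db; set sm := Num.sqrt m; set sG := Num.sqrt G.
have sm0 : 0 < sm by rewrite sqrtr_gt0.
have sG0 : 0 < sG by rewrite sqrtr_gt0.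
rewrite sqrtrM ?(ltW m0) // -/sm -/sG.
apply: le_trans (_ : _ <= m^-1 * (m * r + b / (2 * (sm * sG)^-1)
    + m * ((sm * sG)^-1 / 2 * (b * G)))) _.
  have e0 : 0 <= (2 * (sm * sG)^-1)^-1.
    by rewrite invr_ge0 mulr_ge0 ?invr_ge0 ?mulr_ge0 ?(ltW sm0) ?(ltW sG0).
  by rewrite ler_wpM2l ?invr_ge0 ?(ltW m0) // lerD2r lerD2l ler_wpM2r.
rewrite -[m](sqr_sqrtr (ltW m0)) -[G](sqr_sqrtr (ltW G0)) -/sm -/sG le_eqVlt.
by apply: predU1l; field; rewrite !gt_eqF.
Qed.

Unset Implicit Arguments.

Theorem theorem2 (R : realType) (d : nat) (dT : measure_display)
  (T : measurableType dT) (P : probability T R)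
  (X : T -> 'rV[R]_d) (Y : T -> R) (B : R) (m k : nat)
  (w1 wstar : 'rV[R]_d) :
  (0 < B) -> (0 < m)%N -> (0 < k)%N ->
  (forall i : 'I_d, measurable_fun setT (fun t => X t 0 i)) ->
  measurable_fun setT Y ->
  {ae P, forall t, norm2 (X t) <= 1} ->
  {ae P, forall t, `|Y t| <= B} ->
  0 < \sum_(j < d) Num.sqrt (second_moment P X j) ->
  w1 != 0 -> norm2 w1 <= B ->
  norm2 wstar <= B ->
  let mom := second_moment P X in
  let hn := half_norm mom in
  let eta := (Num.sqrt (m%:R * (k%:R^-1 * hn + 1)))^-1 in
  (expected_output_risk P X Y B eta (ddaerr_q mom) k m w1
     <= risk P X Y wstar
        + (4 * B ^+ 2 / Num.sqrt m%:R * Num.sqrt (k%:R^-1 * hn + 1))%:E)%E.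
Proof.
move=> B0 m0 k0 mX mY X_le1 Y_le S0 _ w1B wsB; cbv zeta.
set mom := second_moment P X; set G := k%:R^-1 * half_norm mom + 1.
have mom_ge0 j : 0 <= mom j := second_moment_ge0 P X j.
have G0 : 0 < G by rewrite ltr_pwDr // mulr_ge0 ?invr_ge0 ?ler0n ?sqr_ge0.
have eta0 : 0 < (Num.sqrt (m%:R * G))^-1 by rewrite invr_gt0 sqrtr_gt0 mulr_gt0 ?ltr0n.
have supp : {ae P, forall t j, ddaerr_q mom j = 0 -> X t 0 j = 0}.
  apply: filter_forall => j.
  have [/(ddaerr_q_eq0 mom_ge0 S0) mj|qj] := eqVneq (ddaerr_q mom j) 0.
    by apply: filterS (second_moment_eq0 mX X_le1 mj) => t ->.
  by apply: aeW => t /eqP; rewrite (negbTE qj).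
have := run_exp_le_potential mX mY X_le1 Y_le (ddaerr_q_sum1 S0) (ddaerr_q_ge0 S0)
  k0 B0 eta0 wsB m0 supp (n := m.-1) (ws := [::]) w1B.
rewrite add0n prednK // => /(_ erefl) /le_trans; apply.
rewrite (risk_fineK mX mY X_le1 Y_le) -EFinD lee_fin /potential big_nil add0r prednK //.
rewrite /grad_moment ddaerr_importance_sum // -/mom -/G.
by apply: step_size_balance; rewrite ?ltr0n // sqnormB_le.
Qed.
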